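(* Let $\mathcal G$ be a good and equicontinuous pseudogroup on a compact metric space $X$, with good generating set $\mathcal G_1$ and compacted generating set $\mathcal G_2$. Then there is no Borel probability measure on $X$ that is $(\mathcal G,\mathcal G_2)$-expansive.
   Context: $\mathrm{Homeo}(X)$: homeomorphisms $g:D_g\to R_g$ between open subsets of $X$, composed on natural domains $D_{h\circ g}=g^{-1}(D_h)$. A pseudogroup is a subset of $\mathrm{Homeo}(X)$ containing $\mathrm{id}_X$, closed under composition, inversion, restriction to open subsets, and gluing along open covers of the domain. $\Gamma$ generates $\mathcal G$ if $\bigcup_{g\in\Gamma}(D_g\cup R_g)=X$ and $\mathcal G$ is exactly the set of $g\in\mathrm{Homeo}(X)$ locally equal near each point of $D_g$ to a finite composition of elements of $\Gamma$ and their inverses. A finite symmetric (containing $\mathrm{id}_X$, closed under inverses) generating set $\mathcal G_1$ is good if for each $g\in\mathcal G_1$ there is a compact $K_g\subset D_g$ such that $\mathcal G_2=\{g|_{\mathrm{int}(K_g)}:g\in\mathcal G_1\}$ still generates $\mathcal G$ ($\mathcal G_2$ is the compacted generating set; $\mathcal G$ is good if it has a good generating set). $\mathcal G$ is equicontinuous if it has a generating set $\Gamma$ closed under composition and inversion and satisfying: for every $\varepsilon>0$ there is $\delta>0$ such that for all $x,y\in X$ and $g\in\Gamma$ with $x,y\in D_g$, $d(x,y)<\delta\Rightarrow d(g(x),g(y))<\varepsilon$. Let $\mathcal G^2_n=\{h_1\circ\cdots\circ h_n:h_j\in\mathcal G_2\}$, $\mathcal G^{2,x}_n=\{g\in\mathcal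 G^2_n:x\in D_g\}$, $\Phi^2_\delta(x)=\{y:d(g(x),g(y))\le\delta\ \forall n\in\mathbb N,\ \forall g\in\mathcal G^{2,x}_n\cap\mathcal G^{2,y}_n\}$. A Borel probability measure $\mu$ is $(\mathcal G,\mathcal G_2)$-expansive if there is $\delta>0$ with $\mu(\Phi^2_\delta(x))=0$ for every $x\in X$. *)

From HB Require Import structures.
From mathcomp Require Import all_boot all_order all_algebra.
From mathcomp Require Import all_classical all_reals all_analysis.
Set Implicit Arguments. Unset Strict Implicit. Unset Printing Implicit Defensive.
Import Order.TTheory GRing.Theory Num.Theory.
Local Open Scope classical_set_scope.
Local Open Scope ring_scope.

Section Pseudogroups.
Variables (R : realType) (X : metricType R).

(* A partial map of X, encoded as X -> option X; its domain is where it is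
   defined.  This encoding makes composition on natural domains automatic. *)
Definition parmap := X -> option X.

Definition dom (g : parmap) : set X := [set x | exists y, g x = Some y].
Definition ran (g : parmap) : set X := [set y | exists x, g x = Some y].

(* totalisation (only used on the domain) *)
Definition tot (g : parmap) (x : X) : X := odflt x (g x).

Definition pid : parmap := fun x => Some x.

Definition pcomp (h g : parmap) : parmap := fun x => obind h (g x).

Definition prestrict (g : parmap) (U : set X) : parmap :=
  fun x => if pselect (U x) is left _ then g x else None.

Definition pinv (g : parmap) : parmap := fun y =>
  match pselect (exists x, g x = Some y) with
  | left h => Some (projT1 (cid h))
  | right _ => None
  end.

Definition Homeo (g : parmap) : Prop :=
  [/\ open (dom g), open (ran g),
      (forall x1 x2 y, g x1 = Some y -> g x2 = Some y -> x1 = x2),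
      (forall x, dom g x -> {for x, continuous (tot g)}) &
      (forall y, ran g y -> {for y, continuous (tot (pinv g))})].

Definition pseudogroup (G : set parmap) : Prop :=
  [/\ (forall g, G g -> Homeo g),
      G pid,
      (forall g h, G g -> G h -> G (pcomp h g)),
      (forall g, G g -> G (pinv g)) &
      (forall g U, G g -> open U -> G (prestrict g U))] /\
      (forall g (I : Type) (U : I -> set X), Homeo g ->
         (forall i, open (U i)) -> dom g = \bigcup_i U i ->
         (forall i, G (prestrict g (U i))) -> G g).

Fixpoint compn (S : set parmap) (n : nat) : set parmap :=
  match n with
  | 0 => [set pid]
  | n'.+1 => [set pcomp h g | h in S & g in compn S n']
  end.

Definition words (Gamma : set parmap) : set parmap :=
  \bigcup_(n in [set: nat]) compn (Gamma `|` [set pinv h | h in Gamma]) n.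

Definition generates (Gamma G : set parmap) : Prop :=
  [/\ (forall g, Gamma g -> Homeo g),
      \bigcup_(g in Gamma) (dom g `|` ran g) = [set: X] &
      (forall g, G g <-> (Homeo g /\
          forall x, dom g x -> exists2 w, words Gamma w &
                                 \forall y \near x, g y = w y))].

Definition symmetric_gen (G1 : set parmap) : Prop :=
  G1 pid /\ forall g, G1 g -> G1 (pinv g).

Definition compacted (G1 : set parmap) (K : parmap -> set X) : set parmap :=
  [set prestrict g (interior (K g)) | g in G1].

Definition good_gen (G G1 : set parmap) (K : parmap -> set X) : Prop :=
  [/\ finite_set G1, symmetric_gen G1, generates G1 G,
      (forall g, G1 g -> compact (K g) /\ K g `<=` dom g) &
      generates (compacted G1 K) G].

Definition equicontinuous_pg (G : set parmap) : Prop :=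
  exists Gamma : set parmap,
    [/\ generates Gamma G,
        (forall g h, Gamma g -> Gamma h -> Gamma (pcomp h g)),
        (forall g, Gamma g -> Gamma (pinv g)) &
        forall eps : R, 0 < eps -> exists2 delta : R, 0 < delta &
          forall x y g, Gamma g -> dom g x -> dom g y ->
            mdist x y < delta -> mdist (tot g x) (tot g y) < eps].

Definition Phi (G2 : set parmap) (delta : R) (x : X) : set X :=
  [set y | forall n g, (0 < n)%N -> compn G2 n g -> dom g x -> dom g y ->
             mdist (tot g x) (tot g y) <= delta].

End Pseudogroups.

(* metric spaces with a distinguished point (measurableType in
   MathComp-Analysis requires a pointed carrier) *)
#[short(type="pmetricType")]
HB.structure Definition PointedMetric (K : numDomainType) :=
  {M of Metric K M & isPointed M}.

Definition borel (R : realType) (X : pmetricType R)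
  : measurableType (@open X).-sigma := g_sigma_algebraType (@open X).

Definition expansive (R : realType) (X : pmetricType R)
    (mu : probability (borel X) R) (G2 : set (parmap X)) : Prop :=
  exists2 delta : R, 0 < delta &
    forall x : X, mu.-negligible (Phi G2 delta x).

From Pilot Require Import Defs.
From HB Require Import structures.
From mathcomp Require Import all_boot all_order all_algebra.
From mathcomp Require Import all_classical all_reals all_analysis.
Import Defs.
Import Order.TTheory GRing.Theory Num.Theory.
Set Implicit Arguments. Unset Strict Implicit. Unset Printing Implicit Defensive.
Local Open Scope classical_set_scope.
Local Open Scope ring_scope.

(* Fix delta > 0.  Using equicontinuity and a Lebesgue number for the finitely
   many compact sets K g, one finds d > 0 such that along any composition h of
   the compacted generators, two points at distance < d are moved exactly as by
   a single member of the equicontinuous generating set (or by the identity);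
   hence they stay delta-close.  So every Phi_delta(x) contains a ball around x,
   and a compact X would be covered by finitely many null sets, which is absurd
   for a probability measure. *)

Section Generation.
Variables (R : realType) (X : metricType R).

Definition pcomp_closed (S : set (parmap X)) :=
  forall g h, S g -> S h -> S (pcomp h g).

Lemma pcomp_pidl (g : parmap X) : pcomp (@pid R X) g = g.
Proof. by apply/funext => x; rewrite /pcomp; case: (g x). Qed.

Lemma prestrictE (g : parmap X) (U : set X) x : U x -> prestrict g U x = g x.
Proof. by rewrite /prestrict; case: pselect. Qed.

Lemma dom_prestrict (g : parmap X) (U : set X) x : dom (prestrict g U) x -> U x.
Proof. by rewrite /prestrict /dom /=; case: pselect => // _ []. Qed.

Variable Gamma : set (parmap X).
Hypotheses (Gamma_pcomp : pcomp_closed Gamma)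
  (Gamma_pinv : forall g, Gamma g -> Gamma (pinv g)).

Lemma pcomp_closed_setUpid : pcomp_closed (Gamma `|` [set @pid R X]).
Proof.
move=> g h [Gg|->] [Gh|->].
- by left; apply: Gamma_pcomp.
- by rewrite pcomp_pidl; left.
- by left.
- by right.
Qed.

Lemma words_setUpid : words Gamma `<=` Gamma `|` [set @pid R X].
Proof.
move=> w [n _]; elim: n w => [|n IH] w /=; first by move->; right.
case=> h Sh [g /IH Sg <-]; apply: pcomp_closed_setUpid Sg _; left.
by case: Sh => [//|[h' Gh' <-]]; apply: Gamma_pinv.
Qed.

Variable G : set (parmap X).
Hypothesis Gamma_gen : generates Gamma G.

Lemma generates_sub : Gamma `<=` G.
Proof.
case: Gamma_gen => Gamma_homeo _ GP g Gg; apply/GP; split; first exact: Gamma_homeo.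
move=> x _; exists g; last exact: filterE.
by exists 1%N => //; exists g; [left | exists (@pid R X)].
Qed.

Lemma generates_near_setUpid g x : G g -> dom g x ->
  exists2 w, (Gamma `|` [set @pid R X]) w & \forall y \near x, g y = w y.
Proof.
move=> Gg gx; case: Gamma_gen => _ _ /(_ g) [/(_ Gg)].
by case=> _ /(_ x gx) [w /words_setUpid]; exists w.
Qed.

End Generation.

Section Tracing.
Variables (R : realType) (X : metricType R) (S : set (parmap X)).

Definition traced (g : parmap X) (x y : X) :=
  exists2 w, S w & g x = w x /\ g y = w y.

Lemma lebesgue_number_traced (g : parmap X) (A : set X) : compact A ->
  (forall x, A x -> exists2 w, S w & \forall y \near x, g y = w y) ->
  \forall r \near 0^'+, forall a b, A a -> mdist a b < r -> traced g a b.
Proof.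
move=> cA Anear.
apply: filterS ((compact_near_coveringP A).1 cA R 0^'+
  (fun r a => forall b, mdist a b < r -> traced g a b) _ _).
  by move=> r Ar a b /Ar; apply.
move=> x Ax.
have [w Sw /nbhs_ballP[e e_gt0 gw]] := Anear x Ax.
have e2_gt0 : 0 < e / 2 by rewrite divr_gt0.
exists (ball x (e / 2), [set r | r < e / 2]).
  by split; [exact: nbhsx_ballx | exact: nbhs_right_lt].
move=> [a r] [/= xa re] b ab; exists w => //.
move: xa; rewrite ballEmdist /= => xa.
split; apply: gw; rewrite ballEmdist /=.
  by rewrite (lt_trans xa) // ltr_pdivrMr // ltr_pMr // ltr1n.
by rewrite (le_lt_trans (metric_triangle _ a _)) // [e]splitr ltrD // (lt_trans ab).
Qed.

Lemma compacted_traced (G1 : set (parmap X)) (K : parmap X -> set X) (r : R) :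
  (forall g, G1 g -> forall a b, K g a -> mdist a b < r -> traced g a b) ->
  forall g a b, compacted G1 K g -> dom g a -> dom g b ->
    mdist a b < r -> traced g a b.
Proof.
move=> G1_traced _ a b [g G1g <-] ga gb ab.
have [Ka Kb] := (dom_prestrict ga, dom_prestrict gb).
have [w Sw [wa wb]] := G1_traced g G1g a b (interior_subset Ka) ab.
by exists w => //; split; [rewrite -wa | rewrite -wb]; apply: prestrictE.
Qed.

Hypotheses (S_pcomp : pcomp_closed S) (S_pid : S (@pid R X)).

Lemma traced_pcomp g h x y x1 y1 : h x = Some x1 -> h y = Some y1 ->
  traced h x y -> traced g x1 y1 -> traced (pcomp g h) x y.
Proof.
move=> hx hy [W SW [Wx Wy]] [w Sw [wx wy]]; exists (pcomp w W); first exact: S_pcomp.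
by rewrite /pcomp -Wx -Wy hx hy.
Qed.

Variables (G2 : set (parmap X)) (r d : R).
Hypothesis S_equi : forall w x y, S w -> dom w x -> dom w y ->
  mdist x y < d -> mdist (tot w x) (tot w y) < r.
Hypothesis G2_traced : forall g a b, G2 g -> dom g a -> dom g b ->
  mdist a b < r -> traced g a b.

Lemma traced_mdist h x y : traced h x y -> dom h x -> dom h y ->
  mdist x y < d -> mdist (tot h x) (tot h y) < r.
Proof.
move=> [w Sw [wx wy]] [x1 hx] [y1 hy]; rewrite /tot wx wy; apply: S_equi => //.
- by exists x1; rewrite -wx.
- by exists y1; rewrite -wy.
Qed.

Lemma compn_traced n h x y : compn G2 n h -> dom h x -> dom h y ->
  mdist x y < d -> traced h x y.
Proof.
elim: n h x y => [|n IH] h x y /=; first by move=> -> *; exists (@pid R X).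
case=> g G2g [h' h'_n <-] [z gx] [z' gy] xy; move: gx gy; rewrite /pcomp.
case hx: (h' x) => [x1|] //= gx1; case hy: (h' y) => [y1|] //= gy1.
have tr_xy : traced h' x y by apply: IH => //; [exists x1 | exists y1].
apply: (traced_pcomp hx hy tr_xy); apply: G2_traced => //; [exists z | exists z' |] => //.
have := traced_mdist tr_xy _ _ xy; rewrite /tot hx hy; apply; by [exists x1 | exists y1].
Qed.

End Tracing.

Lemma near_finite_set_forall (T : Type) (I : choiceType) (A : set I)
    (F : set_system T) (P : I -> T -> Prop) : Filter F -> finite_set A ->
  (forall i, A i -> \forall x \near F, P i x) ->
  \forall x \near F, forall i, A i -> P i x.
Proof.
move=> FF /finite_fsetP[D ->] DP.
by apply: filterS (filter_bigI FF DP) => x DPx i Di; apply: DPx.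
Qed.

Section Expansivity.
Variables (R : realType) (X : metricType R) (G G1 Gamma : set (parmap X)).
Variable K : parmap X -> set X.
Hypotheses (G1_good : good_gen G G1 K) (Gamma_gen : generates Gamma G)
  (Gamma_pcomp : pcomp_closed Gamma)
  (Gamma_pinv : forall g, Gamma g -> Gamma (pinv g)).
Hypothesis Gamma_equi : forall eps : R, 0 < eps -> exists2 delta : R, 0 < delta &
  forall x y g, Gamma g -> dom g x -> dom g y ->
    mdist x y < delta -> mdist (tot g x) (tot g y) < eps.

Local Notation S := (Gamma `|` [set @pid R X]).

Lemma good_gen_lebesgue_number : \forall r \near 0^'+,
  forall g, G1 g -> forall a b, K g a -> mdist a b < r -> traced S g a b.
Proof.
case: G1_good => G1_fin _ G1_gen K_compact _.
apply: near_finite_set_forall G1_fin _ => g G1g.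
have [cK Kdom] := K_compact g G1g.
apply: filterS (lebesgue_number_traced cK _) => [r Kr a b|a Ka]; first exact: Kr.
have [w Sw gw] := generates_near_setUpid Gamma_pcomp Gamma_pinv Gamma_gen
  (generates_sub G1_gen G1g) (Kdom a Ka).
by exists w.
Qed.

Lemma Phi_nbhs (delta : R) (x : X) : 0 < delta ->
  nbhs x (Phi (compacted G1 K) delta x).
Proof.
move=> delta_gt0.
have [r [[r_gt0 r_le_delta] G1_traced]] := filter_ex (filterI
  (filterI (nbhs_right_gt 0) (nbhs_right_le delta_gt0)) good_gen_lebesgue_number).
have [d0 d0_gt0 Gamma_d0] := Gamma_equi r_gt0.
have S_equi w a b : S w -> dom w a -> dom w b ->
    mdist a b < Num.min d0 r -> mdist (tot w a) (tot w b) < r.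
  by rewrite lt_min => -[Gw|->] wa wb /andP[ab_d0 ab_r] //; apply: Gamma_d0.
have S_pid : S (@pid R X) by right.
apply/nbhs_ballP; exists (Num.min d0 r) => [|y + n g _ gn xg yg].
  by rewrite /= lt_min d0_gt0 r_gt0.
rewrite ballEmdist => xy.
have xy_traced := compn_traced (pcomp_closed_setUpid Gamma_pcomp) S_pid S_equi
  (compacted_traced G1_traced) gn xg yg xy.
exact/ltW/(lt_le_trans (traced_mdist S_equi xy_traced xg yg xy)).
Qed.

End Expansivity.

Lemma compact_locally_negligible (R : realType) (X : pmetricType R)
    (mu : {measure set (borel X) -> \bar R}) (A : set X) : compact A ->
  (forall x, A x -> exists2 U, nbhs x U & mu.-negligible U) -> mu.-negligible A.
Proof.
move=> cA A_neg.
(* Compactness, used against the almost-everywhere filter, glues the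
   negligible neighbourhoods along a finite subcover. *)
have : \forall i \near almost_everywhere mu, A `<=` (fun x => i <> x).
  apply: (compact_near_coveringP A).1 cA _ _ _ _ _ => x /A_neg [U xU U_neg].
  exists (U, ~` U) => [|[y i] [/= Uy Ui] iy]; last by apply: Ui; rewrite iy.
  by split => //; apply: negligibleS U_neg => i /contrapT.
move=> ae_notA; apply: negligibleS ae_notA => a Aa notA.
exact: notA a Aa erefl.
Qed.

Theorem mainTheorem19 (R : realType) (X : pmetricType R)
    (G G1 : set (parmap X)) (K : parmap X -> set X) :
  compact [set: X] ->
  pseudogroup G ->
  good_gen G G1 K ->
  equicontinuous_pg G ->
  ~ exists mu : probability (borel X) R, expansive mu (compacted G1 K).
Proof.
move=> cX _ G1_good [Gamma [Gamma_gen Gamma_pcomp Gamma_pinv Gamma_equi]].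
move=> [mu [delta delta_gt0 Phi_neg]].
have : mu.-negligible [set: X].
  apply: compact_locally_negligible cX _ => x _.
  exists (Phi (compacted G1 K) delta x); last exact: Phi_neg.
  exact: Phi_nbhs G1_good Gamma_gen Gamma_pcomp Gamma_pinv Gamma_equi _ _ delta_gt0.
move/(measure_negligible measurableT) => muT0.
by have := probability_setT mu; rewrite muT0 => /esym/eqP; rewrite onee_eq0.
Qed.
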